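(* $$\{\mathbf{M}\mathbf{X}\mathbf{M}^T:\mathbf{X}\in\mathcal{X}\cap\mathcal{H}\}=\left\{\mathbf{Y}\in\mathbb{S}^m:\ \mathrm{Tr}(\mathbf{Y})=1,\ \mathbf{Y}\succeq\tfrac14\mathbf{d}\mathbf{d}^T\text{ where }\mathbf{d}=\mathrm{diag}(\mathbf{Y})\right\}.$$
   Context: $\mathbf{e}$ is the all-ones vector, $\mathbb{S}^{k}$ the real symmetric $k\times k$ matrices, $\mathrm{diag}(\mathbf{Y})$ the vector of diagonal entries. $\mathcal{X}=\{\mathbf{X}\in\mathbb{S}^{m+1}:\mathrm{diag}(\mathbf{X})=\mathbf{e},\mathbf{X}\succeq\mathbf{0}\}$, $\mathbf{M}=[\mathbf{I}_m\ -\mathbf{e}]\in\mathbb{R}^{m\times(m+1)}$, $\mathcal{H}=\{\mathbf{X}\in\mathbb{S}^{m+1}:\mathrm{Tr}(\mathbf{M}\mathbf{X}\mathbf{M}^T)=1\}$. $\mathbf{A}\succeq\mathbf{B}$ means $\mathbf{A}-\mathbf{B}$ is positive semidefinite. *)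

From mathcomp Require Import all_boot all_order all_algebra.
From mathcomp Require Import reals.
Set Implicit Arguments. Unset Strict Implicit. Unset Printing Implicit Defensive.
Import Order.TTheory GRing.Theory Num.Theory.
Local Open Scope ring_scope.

Definition symmx (R : realType) (k : nat) (A : 'M[R]_k) : Prop := A^T = A.

Definition psd (R : realType) (k : nat) (A : 'M[R]_k) : Prop :=
  symmx A /\ forall x : 'cV[R]_k, 0 <= (x^T *m A *m x) 0 0.

Definition psd_ge (R : realType) (k : nat) (A B : 'M[R]_k) : Prop := psd (A - B).

Definition diagv (R : realType) (k : nat) (Y : 'M[R]_k) : 'cV[R]_k :=
  \col_i Y i i.

Definition ones (R : realType) (k : nat) : 'cV[R]_k := const_mx 1.

Definition Mmat (R : realType) (m : nat) : 'M[R]_(m, m + 1) :=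
  row_mx 1%:M (- ones R m).

Definition calX (R : realType) (m : nat) (X : 'M[R]_(m + 1)) : Prop :=
  symmx X /\ diagv X = ones R (m + 1) /\ psd X.

Definition calH (R : realType) (m : nat) (X : 'M[R]_(m + 1)) : Prop :=
  symmx X /\ \tr (Mmat R m *m X *m (Mmat R m)^T) = 1.

From mathcomp Require Import all_boot all_order all_algebra.
From mathcomp Require Import reals ring.
Set Implicit Arguments. Unset Strict Implicit. Unset Printing Implicit Defensive.
Import Order.TTheory GRing.Theory Num.Theory.
Local Open Scope ring_scope.

(* Write X in calX as the block matrix [Z a; a^T 1].  Then
   M X M^T = Z - e a^T - a e^T + e e^T, whose diagonal d equals 2 (e - a)
   because diag Z = e; hence a = e - d/2 is determined by Y = M X M^T, and
   Y - d d^T / 4 = Z - a a^T is the Schur complement of the corner 1, which is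
   PSD exactly when X is.  Conversely every Y of the stated form lifts with
   a := e - d/2 and Z := Y - d d^T / 4 + a a^T, and Tr(M X M^T) = Tr Y. *)

Section PSD.
Variable R : realType.

Lemma symmx_conj k n (A : 'M[R]_k) (P : 'M[R]_(n, k)) :
  symmx A -> symmx (P *m A *m P^T).
Proof. by rewrite /symmx !trmx_mul trmxK => ->; rewrite mulmxA. Qed.

Lemma psd_congruence n k (A : 'M[R]_n) (P : 'M[R]_(n, k)) :
  psd A -> psd (P^T *m A *m P).
Proof.
case=> sA pA; split; first by rewrite /symmx !trmx_mul trmxK sA mulmxA.
by move=> x; have := pA (P *m x); rewrite trmx_mul !mulmxA.
Qed.

Lemma psdD n (A B : 'M[R]_n) : psd A -> psd B -> psd (A + B).
Proof.
case=> sA pA [sB pB]; split; first by rewrite /symmx linearD /= sA sB.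
by move=> x; rewrite mulmxDr mulmxDl mxE addr_ge0.
Qed.

Lemma psd_mul_tr n k (W : 'M[R]_(n, k)) : psd (W *m W^T).
Proof.
split=> [|x]; first by rewrite /symmx trmx_mul trmxK.
rewrite mulmxA -mulmxA -[x^T *m W]trmxK trmx_mul trmxK mxE.
by apply: sumr_ge0 => i _; rewrite mxE -expr2 sqr_ge0.
Qed.

Lemma psd_block_schur n (Z : 'M[R]_n) (a : 'cV[R]_n) :
  psd (block_mx Z a a^T 1%:M) <-> psd (Z - a *m a^T).
Proof.
split=> [psdX | psdS].
  have -> : Z - a *m a^T =
      (col_mx 1%:M (- a^T))^T *m block_mx Z a a^T 1%:M *m col_mx 1%:M (- a^T).
    rewrite tr_col_mx trmx1 linearN /= trmxK mul_row_block mul_row_col.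
    by rewrite !mul1mx !mulmx1 !mulNmx addrN mul0mx addr0.
  exact: psd_congruence.
have -> : block_mx Z a a^T 1%:M =
    (row_mx 1%:M 0)^T *m (Z - a *m a^T) *m row_mx 1%:M (0 : 'M_(n, 1))
    + col_mx a 1%:M *m (col_mx a (1%:M : 'M_1))^T.
  rewrite tr_row_mx tr_col_mx trmx1 trmx0 mul_col_mx !mul_col_row.
  rewrite !mul1mx !mulmx1 !mul0mx !mulmx0 add_block_mx !add0r trmx1 mulmx1.
  by rewrite subrK.
exact/psdD/psd_mul_tr/psd_congruence.
Qed.

End PSD.

Section ProjectedElliptope.
Variables (R : realType) (m : nat).

Local Notation M := (Mmat R m).
Local Notation e := (ones R m).

Lemma Mmat_conj_block (Z : 'M[R]_m) (a : 'cV[R]_m) :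
  M *m block_mx Z a a^T 1%:M *m M^T = Z - e *m a^T - a *m e^T + e *m e^T.
Proof.
rewrite /Mmat mul_row_block tr_row_mx mul_row_col trmx1 !mul1mx !mulmx1.
by rewrite linearN /= mulmxN mulmxBl !mulNmx opprD opprK addrA.
Qed.

Lemma Mmat_conj_block_schur (Z : 'M[R]_m) (a : 'cV[R]_m) :
  (forall i, Z i i = 1) ->
  let Y := M *m block_mx Z a a^T 1%:M *m M^T in
  Y - 4%:R^-1 *: (diagv Y *m (diagv Y)^T) = Z - a *m a^T.
Proof.
move=> dZ /=; rewrite Mmat_conj_block; apply/matrixP => i j.
by rewrite !(mxE, big_ord1) !dZ; field.
Qed.

Lemma calX_block (X : 'M[R]_(m + 1)) : calX X ->
  X = block_mx (ulsubmx X) (ursubmx X) (ursubmx X)^T 1%:M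
  /\ forall i, ulsubmx X i i = 1.
Proof.
case=> sX [dX _].
have dXE i : X i i = 1 by have /matrixP/(_ i 0) := dX; rewrite !mxE.
split=> [|i]; last by rewrite !mxE dXE.
rewrite -{1}(submxK X); congr block_mx; first by rewrite trmx_ursub sX.
by apply/matrixP => i j; rewrite !ord1 !mxE dXE.
Qed.

Definition Mmat_lift (Y : 'M[R]_m) : 'M[R]_(m + 1) :=
  let d := diagv Y in
  let a := e - 2%:R^-1 *: d in
  block_mx (Y - 4%:R^-1 *: (d *m d^T) + a *m a^T) a a^T 1%:M.

Lemma Mmat_liftK (Y : 'M[R]_m) : M *m Mmat_lift Y *m M^T = Y.
Proof.
rewrite Mmat_conj_block; apply/matrixP => i j.
by rewrite !(mxE, big_ord1); field.
Qed.

Lemma symmx_Mmat_lift (Y : 'M[R]_m) : symmx Y -> symmx (Mmat_lift Y).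
Proof.
move=> sY; rewrite /symmx tr_block_mx trmxK trmx1 linearD linearB /=.
by rewrite linearZ /= !trmx_mul !trmxK sY.
Qed.

Lemma diagv_Mmat_lift (Y : 'M[R]_m) : diagv (Mmat_lift Y) = ones R (m + 1).
Proof.
apply/matrixP => i j; rewrite ord1 [RHS]mxE mxE /Mmat_lift /=.
case: (split_ordP i) => k ->; last by rewrite block_mxEdr !mxE ord1.
by rewrite block_mxEul !(mxE, big_ord1); field.
Qed.

End ProjectedElliptope.

Theorem lemma6 (R : realType) (m : nat) (Y : 'M[R]_m) :
  (exists X : 'M[R]_(m + 1),
      calX X /\ calH X /\ Y = Mmat R m *m X *m (Mmat R m)^T)
  <->
  (symmx Y /\ \tr Y = 1 /\
   psd_ge Y ((4%:R)^-1 *: (diagv Y *m (diagv Y)^T))).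
Proof.
split.
  move=> [X [XcalX [[sX trY] ->]]]; split; [exact: symmx_conj | split=> //].
  have [eX dZ] := calX_block XcalX.
  rewrite /psd_ge eX Mmat_conj_block_schur // -psd_block_schur -eX.
  by case: XcalX => _ [].
move=> [sY [trY psdS]].
have sX := symmx_Mmat_lift sY.
exists (Mmat_lift Y); rewrite /calH Mmat_liftK.
split; [split=> //; split | by []].
  exact: diagv_Mmat_lift.
by rewrite /Mmat_lift psd_block_schur addrK.
Qed.
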